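(* Let $k\ge k_0$ ($k_0$ a sufficiently large constant) and $\beta\geq k\ln 2-10\ln k$. Let $a$ be a clause on $k$ distinct variables $\partial a$, where each $x\in\partial a$ appears in $a$ either positively ($x\in\partial_1 a$) or negatively ($x\in\partial_{-1}a$). Let $(\nu_{x\to a})_{x\in\partial a}$ be probability distributions on $\{-1,1\}$, set $\partial_{\rm good}a=\{x\in\partial a:\nu_{x\to a}(1)\geq1-e^{-k\beta/2}\}$, and for $x\in\partial a$, $s\in\{\pm1\}$ define $$\hat\nu_{a\to x}(s)=\frac{\sum_{s_a\in\{\pm1\}^{\partial a}}\mathbf 1\{s_x=s\}\psi_{a,\beta}(s_a)\prod_{y\in\partial a\setminus\{x\}}\nu_{y\to a}(s_y)}{\sum_{s_a\in\{\pm1\}^{\partial a}}\psi_{a,\beta}(s_a)\prod_{y\in\partial a\setminus\{x\}}\nu_{y\to a}(s_y)}.$$ Then for every $x\in\partial a$: (a) $e^{-\beta}\leq\hat\nu_{a\to x}(1)/\hat\nu_{a\to x}(-1)\leq e^{\beta}$; (b) if $x\in\partial_1a$, then $\hat\nu_{a\to x}(1)/\hat\nu_{a\to x}(-1)\geq1$; (c) if $\partial_1a=\{x\}$ and $\partial_{-1}a\subset\partial_{\rm good}a$, then $\hat\nu_{a\to x}(1)/\hat\nu_{a\to x}(-1)\geq e^{0.99\beta}$; (d) if $p\ge1$ is an integer with $|(\partial_1a\setminus\{x\})\cap\partial_{\rm good}a|\geq p$, then $\hat\nu_{a\to x}(1)/\hat\nu_{a\to x}(-1)\geq\exp(-\e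xp(-pk\beta/3))$.
   Context: For $s_a\in\{\pm1\}^{\partial a}$ (value $1$ = true), the clause weight is $\psi_{a,\beta}(s_a)=e^{-\beta}$ if every literal of $a$ is false under $s_a$ (i.e. $s_y=-1$ for all $y\in\partial_1a$ and $s_y=1$ for all $y\in\partial_{-1}a$), and $\psi_{a,\beta}(s_a)=1$ otherwise. *)

From Stdlib Require Import Reals Lra List Arith.
Import ListNotations.
Open Scope R_scope.

(* A clause a on k distinct variables, indexed 0..k-1.
   sign y = true  : variable y occurs positively (y in ∂_1 a)
   sign y = false : variable y occurs negatively (y in ∂_{-1} a)
   An assignment s_a ∈ {±1}^{∂a} is a list of k booleans (true = +1 = "true"). *)

Fixpoint assignments (n : nat) : list (list bool) :=
  match n with
  | O => [nil]
  | S m => flat_map (fun s => [true :: s; false :: s]) (assignments m)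
  end.

Definition val (s : list bool) (y : nat) : bool := nth y s false.

Definition all_literals_false (k : nat) (sign : nat -> bool) (s : list bool) : bool :=
  forallb (fun y => Bool.eqb (val s y) (negb (sign y))) (seq 0 k).

Definition psi (beta : R) (k : nat) (sign : nat -> bool) (s : list bool) : R :=
  if all_literals_false k sign s then exp (- beta) else 1.

(* nu y : R is nu_{y->a}(1); nu_{y->a}(-1) = 1 - nu y *)
Definition msg (nu : nat -> R) (y : nat) (b : bool) : R :=
  if b then nu y else 1 - nu y.

Definition Rsum (l : list R) : R := fold_right Rplus 0 l.
Definition Rprod (l : list R) : R := fold_right Rmult 1 l.

Definition prod_others (k : nat) (nu : nat -> R) (x : nat) (s : list bool) : R :=
  Rprod (map (fun y => msg nu y (val s y))
             (filter (fun y => negb (Nat.eqb y x)) (seq 0 k))).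

Definition summand beta k sign nu x (s : list bool) : R :=
  psi beta k sign s * prod_others k nu x s.

Definition hatnu_num beta k sign nu x (b : bool) : R :=
  Rsum (map (summand beta k sign nu x)
            (filter (fun s => Bool.eqb (val s x) b) (assignments k))).

Definition hatnu_den beta k sign nu x : R :=
  Rsum (map (summand beta k sign nu x) (assignments k)).

Definition hatnu beta k sign nu x (b : bool) : R :=
  hatnu_num beta k sign nu x b / hatnu_den beta k sign nu x.

Definition good (k : nat) (beta : R) (nu : nat -> R) (y : nat) : Prop :=
  nu y >= 1 - exp (- (INR k * beta / 2)).

Definition goodb (k : nat) (beta : R) (nu : nat -> R) (y : nat) : bool :=
  if Rle_dec (1 - exp (- (INR k * beta / 2))) (nu y) then true else false.

Definition n_good_pos (k : nat) (beta : R) (sign : nat -> bool) (nu : nat -> R) (x : nat) : nat :=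
  length (filter (fun y => andb (andb (negb (Nat.eqb y x)) (sign y)) (goodb k beta nu y)) (seq 0 k)).

From Stdlib Require Import Reals Lra Lia List Arith.
Open Scope R_scope.

(* Summing out the other variables factorizes: with [Q] the probability, under the product of
   the messages [nu_{y->a}], that every literal of [a] other than [x] is false, one gets
   [hatnu(b) ∝ 1 - (1 - e^-beta) 1{b = ¬sign x} Q].  The ratio is therefore
   [1 / (1 - (1 - e^-beta) Q)] for a positive literal and [1 - (1 - e^-beta) Q] for a negative
   one, with [Q ∈ [0,1]], which gives (a) and (b).  In (c) every other literal is negative and
   good, so [1 - Q <= k e^{-k beta/2}] by a union bound; in (d) the [p] good positive literals
   force [Q <= e^{-p k beta/2}].  What remains are elementary estimates of the exponential,
   using [beta >= 100] once [k >= 512]. *)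

Lemma Rsum_map_scal {A} (c : R) (f : A -> R) (l : list A) :
  Rsum (map (fun a => c * f a) l) = c * Rsum (map f l).
Proof. induction l as [|a l IH]; simpl; [ring|]; rewrite IH; ring. Qed.

Lemma Rsum_map_sub {A} (f g : A -> R) (l : list A) :
  Rsum (map (fun a => f a - g a) l) = Rsum (map f l) - Rsum (map g l).
Proof. induction l as [|a l IH]; simpl; [ring|]; rewrite IH; ring. Qed.

Lemma Rsum_map_filter {A} (P : A -> bool) (f : A -> R) (l : list A) :
  Rsum (map f (filter P l)) = Rsum (map (fun a => (if P a then 1 else 0) * f a) l).
Proof.
  induction l as [|a l IH]; simpl; [reflexivity|].
  destruct (P a); simpl; rewrite IH; ring.
Qed.

Lemma Rprod_cons (a : R) (l : list R) : Rprod (a :: l) = a * Rprod l.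
Proof. reflexivity. Qed.

Lemma Rprod_map_mul {A} (f g : A -> R) (l : list A) :
  Rprod (map (fun a => f a * g a) l) = Rprod (map f l) * Rprod (map g l).
Proof.
  induction l as [|a l IH]; cbn [map]; [unfold Rprod; simpl; ring|].
  rewrite !Rprod_cons, IH; ring.
Qed.

Lemma Rprod_map_filter {A} (P : A -> bool) (f : A -> R) (l : list A) :
  Rprod (map f (filter P l)) = Rprod (map (fun a => if P a then f a else 1) l).
Proof.
  induction l as [|a l IH]; simpl; [reflexivity|].
  destruct (P a); simpl; rewrite IH; ring.
Qed.

Lemma Rprod_map_const1 {A} (l : list A) : Rprod (map (fun _ => 1) l) = 1.
Proof. induction l as [|a l IH]; cbn [map]; [reflexivity|]; rewrite Rprod_cons, IH; ring. Qed.

Lemma Rprod_map_indicator_forallb {A} (P : A -> bool) (l : list A) :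
  Rprod (map (fun a => if P a then 1 else 0) l) = if forallb P l then 1 else 0.
Proof.
  induction l as [|a l IH]; cbn [map forallb]; [reflexivity|]; rewrite Rprod_cons, IH.
  destruct (P a), (forallb P l); simpl; ring.
Qed.

Lemma Rprod_map_pick (f : nat -> R) (x : nat) (l : list nat) : NoDup l -> In x l ->
  Rprod (map f l) = f x * Rprod (map (fun y => if Nat.eqb y x then 1 else f y) l).
Proof.
  induction l as [|z l IH]; intros Hnd Hin; [contradiction|]; cbn [map In] in *.
  inversion_clear Hnd as [|? ? Hz Hnd'].
  rewrite !Rprod_cons.
  destruct (Nat.eqb_spec z x) as [-> | Hzx].
  - rewrite (map_ext_in (fun y => if Nat.eqb y x then 1 else f y) f); [ring|].
    intros y Hy; destruct (Nat.eqb_spec y x) as [-> |]; [contradiction | reflexivity].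
  - destruct Hin as [Hin | Hin]; [congruence|]; rewrite (IH Hnd' Hin); ring.
Qed.

Lemma Rprod_map_seq_pick (a g : nat -> R) (k x : nat) : (x < k)%nat ->
  Rprod (map (fun y => if Nat.eqb y x then a y else g y) (seq 0 k)) =
  a x * Rprod (map (fun y => if Nat.eqb y x then 1 else g y) (seq 0 k)).
Proof.
  intro Hx; rewrite (Rprod_map_pick _ x) by (apply seq_NoDup || (apply in_seq; lia)).
  rewrite Nat.eqb_refl; do 2 f_equal; apply map_ext; intro y.
  destruct (Nat.eqb y x); reflexivity.
Qed.

Lemma Rprod_map_bounds {A} (f : A -> R) (l : list A) :
  (forall a, In a l -> 0 <= f a <= 1) -> 0 <= Rprod (map f l) <= 1.
Proof.
  induction l as [|a l IH]; intro Hf; cbn [map]; [unfold Rprod; simpl; lra|].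
  rewrite Rprod_cons.
  pose proof (Hf a (in_eq a l)); pose proof (IH (fun b Hb => Hf b (in_cons a b l Hb))).
  split; nra.
Qed.

Lemma one_sub_Rprod_map_le {A} (f : A -> R) (l : list A) (eps : R) :
  (forall a, In a l -> 0 <= f a <= 1 /\ 1 - eps <= f a) ->
  1 - Rprod (map f l) <= INR (length l) * eps.
Proof.
  induction l as [|a l IH]; intro Hf; cbn [map length]; [unfold Rprod; simpl; lra|].
  rewrite Rprod_cons, S_INR.
  pose proof (Hf a (in_eq a l)).
  pose proof (IH (fun b Hb => Hf b (in_cons a b l Hb))).
  pose proof (Rprod_map_bounds f l (fun b Hb => proj1 (Hf b (in_cons a b l Hb)))).
  nra.
Qed.

Lemma Rprod_map_le_pow_count {A} (P : A -> bool) (f : A -> R) (l : list A) (eps : R) :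
  0 <= eps -> (forall a, In a l -> 0 <= f a <= 1) ->
  (forall a, In a l -> P a = true -> f a <= eps) ->
  Rprod (map f l) <= eps ^ length (filter P l).
Proof.
  intro Heps; induction l as [|a l IH]; intros Hf HP; cbn [map filter];
    [unfold Rprod; simpl; lra|].
  rewrite Rprod_cons.
  pose proof (Hf a (in_eq a l)).
  pose proof (Rprod_map_bounds f l (fun b Hb => Hf b (in_cons a b l Hb))).
  pose proof (IH (fun b Hb => Hf b (in_cons a b l Hb)) (fun b Hb => HP b (in_cons a b l Hb))).
  pose proof (pow_le eps (length (filter P l)) Heps).
  specialize (HP a (in_eq a l)).
  destruct (P a); cbn [length pow].
  - specialize (HP eq_refl); apply Rmult_le_compat; lra.
  - nra.
Qed.

Lemma Rsum_map_assignments_S (G : list bool -> R) (n : nat) :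
  Rsum (map G (assignments (S n))) =
  Rsum (map (fun s => G (true :: s)) (assignments n)) +
  Rsum (map (fun s => G (false :: s)) (assignments n)).
Proof. simpl; induction (assignments n) as [|s l IH]; simpl; [ring|]; rewrite IH; ring. Qed.

Lemma Rprod_map_seq_S (f : nat -> R) (n : nat) :
  Rprod (map f (seq 0 (S n))) = f 0%nat * Rprod (map (fun y => f (S y)) (seq 0 n)).
Proof. now rewrite <- cons_seq, <- seq_shift, map_cons, map_map. Qed.

Lemma Rsum_assignments_prod (n : nat) (f : nat -> bool -> R) :
  Rsum (map (fun s => Rprod (map (fun y => f y (val s y)) (seq 0 n))) (assignments n)) =
  Rprod (map (fun y => f y true + f y false) (seq 0 n)).
Proof.
  revert f; induction n as [|n IH]; intro f; [simpl; unfold Rsum, Rprod; simpl; ring|].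
  rewrite Rsum_map_assignments_S, Rprod_map_seq_S, <- (IH (fun y => f (S y))).
  assert (Hfirst : forall b s, Rprod (map (fun y => f y (val (b :: s) y)) (seq 0 (S n))) =
                               f 0%nat b * Rprod (map (fun y => f (S y) (val s y)) (seq 0 n)))
    by (intros; apply Rprod_map_seq_S).
  rewrite (map_ext _ _ (Hfirst true)), (map_ext _ _ (Hfirst false)).
  rewrite !Rsum_map_scal; ring.
Qed.

Lemma exp_pow (t : R) (n : nat) : exp t ^ n = exp (INR n * t).
Proof.
  induction n as [|n IH]; [simpl; rewrite Rmult_0_l, exp_0; reflexivity|].
  rewrite S_INR, <- tech_pow_Rmult, IH, <- exp_plus; f_equal; ring.
Qed.

Lemma pow_le_pow_le1 (x : R) (p n : nat) : 0 <= x <= 1 -> (p <= n)%nat -> x ^ n <= x ^ p.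
Proof.
  intros Hx Hpn; replace n with (p + (n - p))%nat by lia; rewrite pow_add.
  pose proof (pow_le x p (proj1 Hx)); pose proof (pow_le x (n - p) (proj1 Hx)).
  pose proof (pow_incr x 1 (n - p) Hx); rewrite pow1 in *; nra.
Qed.

Lemma exp_neg_mul_one_add_le (t : R) : exp (- t) * (1 + t) <= 1.
Proof.
  pose proof (exp_ineq1_le t); pose proof (exp_pos (- t)).
  assert (exp (- t) * exp t = 1) by (rewrite <- exp_plus, Rplus_opp_l; apply exp_0).
  nra.
Qed.

Lemma exp_neg_le_1 (t : R) : 0 <= t -> exp (- t) <= 1.
Proof. intro Ht; pose proof (exp_neg_mul_one_add_le t); pose proof (exp_pos (- t)); nra. Qed.

Lemma exp_neg_le_half (t : R) : 1 <= t -> exp (- t) <= 1 / 2.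
Proof. intro Ht; pose proof (exp_neg_mul_one_add_le t); pose proof (exp_pos (- t)); nra. Qed.

Lemma ln_le_sub_one (x : R) : 0 < x -> ln x <= x - 1.
Proof. intro Hx; pose proof (exp_ineq1_le (ln x)); rewrite exp_ln in *; lra. Qed.

Lemma exp_neg_sq_le_one_sub_cube (v : R) : 0 <= v <= 1 / 2 -> exp (- v ^ 2) <= 1 - v ^ 3.
Proof.
  intro Hv; pose proof (exp_neg_mul_one_add_le (v ^ 2)); pose proof (exp_pos (- v ^ 2)).
  assert (Hcube : 1 <= (1 - v ^ 3) * (1 + v ^ 2)).
  { assert (0 <= v ^ 2 * (1 - v - v ^ 3)) by (apply Rmult_le_pos; simpl; nra). simpl in *; nra. }
  simpl in *; nra.
Qed.

Lemma one_sub_mul_bounds (e Q : R) : 0 < e <= 1 -> 0 <= Q <= 1 -> e <= 1 - (1 - e) * Q <= 1.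
Proof. intros; split; nra. Qed.

Lemma le_inv_one_sub_mul (M e Q d : R) : 0 < e <= 1 -> 0 <= Q <= 1 -> 0 <= M ->
  1 - Q <= d -> M * e <= 1 / 2 -> M * d <= 1 / 2 -> M <= / (1 - (1 - e) * Q).
Proof.
  intros He HQ HM Hd HMe HMd; pose proof (one_sub_mul_bounds e Q He HQ).
  apply (Rmult_le_reg_r (1 - (1 - e) * Q)); [lra|].
  rewrite Rinv_l by lra; nra.
Qed.

Definition prob_others_false (k : nat) (sign : nat -> bool) (nu : nat -> R) (x : nat) : R :=
  Rprod (map (fun y => if Nat.eqb y x then 1 else msg nu y (negb (sign y))) (seq 0 k)).

Lemma psi_eq_indicator_prod beta k sign (s : list bool) :
  psi beta k sign s = 1 - (1 - exp (- beta)) *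
    Rprod (map (fun y => if Bool.eqb (val s y) (negb (sign y)) then 1 else 0) (seq 0 k)).
Proof.
  unfold psi, all_literals_false; rewrite Rprod_map_indicator_forallb.
  destruct forallb; ring.
Qed.

Lemma weight_mul_prod_others k nu x (w : bool -> R) (s : list bool) : (x < k)%nat ->
  w (val s x) * prod_others k nu x s =
  Rprod (map (fun y => if Nat.eqb y x then w (val s y) else msg nu y (val s y)) (seq 0 k)).
Proof.
  intro Hx; rewrite Rprod_map_seq_pick by exact Hx.
  unfold prod_others; rewrite Rprod_map_filter; do 2 f_equal; apply map_ext; intro y.
  destruct (Nat.eqb y x); reflexivity.
Qed.

(* Writing [psi = 1 - (1 - e^-beta) 1{all literals false}], both terms of the weighted sum
   are sums over assignments of products, which factorize. *)
Lemma Rsum_weighted_summand beta k sign nu x (w : bool -> R) : (x < k)%nat ->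
  Rsum (map (fun s => w (val s x) * summand beta k sign nu x s) (assignments k)) =
  w true + w false - (1 - exp (- beta)) * (w (negb (sign x)) * prob_others_false k sign nu x).
Proof.
  intro Hx.
  set (f := fun y c => if Nat.eqb y x then w c else msg nu y c).
  set (lit_false := fun y c => if Bool.eqb c (negb (sign y)) then 1 else 0).
  assert (Hsummand : forall s, w (val s x) * summand beta k sign nu x s =
    Rprod (map (fun y => f y (val s y)) (seq 0 k)) -
    (1 - exp (- beta)) * Rprod (map (fun y => lit_false y (val s y) * f y (val s y)) (seq 0 k))).
  { intro s; unfold summand; rewrite psi_eq_indicator_prod, Rprod_map_mul.
    unfold f, lit_false; rewrite <- (weight_mul_prod_others k nu x w s Hx).
    (* otherwise [ring] unfolds [prod_others] while matching atoms, which is very slow *)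
    generalize (prod_others k nu x s); intro; ring. }
  rewrite (map_ext _ _ Hsummand), Rsum_map_sub, Rsum_map_scal, (Rsum_assignments_prod k f),
    (Rsum_assignments_prod k (fun y c => lit_false y c * f y c)).
  rewrite (map_ext _ (fun y => if Nat.eqb y x then w true + w false else 1))
    by (intro y; unfold f, msg; destruct (Nat.eqb y x); ring).
  rewrite (map_ext (fun y => lit_false y true * f y true + lit_false y false * f y false)
                   (fun y => if Nat.eqb y x then w (negb (sign y)) else msg nu y (negb (sign y))))
    by (intro y; unfold lit_false, f; destruct (sign y); simpl; ring).
  rewrite (Rprod_map_seq_pick (fun _ => w true + w false)) by exact Hx.
  rewrite (Rprod_map_seq_pick (fun y => w (negb (sign y)))) by exact Hx.
  rewrite (map_ext _ (fun _ => 1)) by (intro y; destruct (Nat.eqb y x); reflexivity).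
  rewrite Rprod_map_const1; unfold prob_others_false; ring.
Qed.

Lemma hatnu_num_eq beta k sign nu x (b : bool) : (x < k)%nat ->
  hatnu_num beta k sign nu x b =
  1 - (1 - exp (- beta)) *
      (if Bool.eqb b (negb (sign x)) then prob_others_false k sign nu x else 0).
Proof.
  intro Hx; unfold hatnu_num; rewrite Rsum_map_filter.
  rewrite (Rsum_weighted_summand _ _ _ _ _ (fun c => if Bool.eqb c b then 1 else 0)) by exact Hx.
  destruct b, (sign x); simpl; ring.
Qed.

Lemma hatnu_den_eq beta k sign nu x : (x < k)%nat ->
  hatnu_den beta k sign nu x = 2 - (1 - exp (- beta)) * prob_others_false k sign nu x.
Proof.
  intro Hx; unfold hatnu_den.
  rewrite (map_ext _ (fun s => 1 * summand beta k sign nu x s)) by (intro; ring).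
  rewrite (Rsum_weighted_summand _ _ _ _ _ (fun _ => 1)) by exact Hx; ring.
Qed.

Lemma hatnu_ratio_eq beta k sign nu x : (x < k)%nat ->
  0 <= prob_others_false k sign nu x <= 1 ->
  hatnu beta k sign nu x true / hatnu beta k sign nu x false =
  if sign x then / (1 - (1 - exp (- beta)) * prob_others_false k sign nu x)
  else 1 - (1 - exp (- beta)) * prob_others_false k sign nu x.
Proof.
  intros Hx HQ; unfold hatnu; rewrite !hatnu_num_eq, hatnu_den_eq by exact Hx.
  pose proof (exp_pos (- beta)); destruct (sign x); simpl; field; nra.
Qed.

Lemma prob_others_false_bounds k sign nu x :
  (forall y, (y < k)%nat -> 0 <= nu y <= 1) -> 0 <= prob_others_false k sign nu x <= 1.
Proof.
  intro Hnu; apply Rprod_map_bounds; intros y Hy; apply in_seq in Hy.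
  specialize (Hnu y ltac:(lia)); unfold msg.
  destruct (Nat.eqb y x), (negb (sign y)); lra.
Qed.

Lemma one_sub_prob_others_false_le k beta sign nu x :
  (forall y, (y < k)%nat -> 0 <= nu y <= 1) ->
  (forall y, (y < k)%nat -> y <> x -> sign y = false) ->
  (forall y, (y < k)%nat -> sign y = false -> good k beta nu y) ->
  1 - prob_others_false k sign nu x <= INR k * exp (- (INR k * beta / 2)).
Proof.
  intros Hnu Hneg Hgood; unfold prob_others_false.
  rewrite <- (length_seq k 0) at 2; apply one_sub_Rprod_map_le; intros y Hy.
  apply in_seq in Hy; pose proof (exp_pos (- (INR k * beta / 2))).
  destruct (Nat.eqb_spec y x) as [_ | Hyx]; [lra|].
  pose proof (Hnu y ltac:(lia)); pose proof (Hgood y ltac:(lia) (Hneg y ltac:(lia) Hyx)).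
  unfold good in *; rewrite (Hneg y ltac:(lia) Hyx); simpl; lra.
Qed.

Lemma prob_others_false_le_pow k beta sign nu x :
  (forall y, (y < k)%nat -> 0 <= nu y <= 1) ->
  prob_others_false k sign nu x <= exp (- (INR k * beta / 2)) ^ n_good_pos k beta sign nu x.
Proof.
  intro Hnu; apply Rprod_map_le_pow_count; [left; apply exp_pos | |].
  - intros y Hy; apply in_seq in Hy; specialize (Hnu y ltac:(lia)); unfold msg.
    destruct (Nat.eqb y x), (negb (sign y)); lra.
  - intros y _ Hy; apply andb_prop in Hy as [Hy Hg]; apply andb_prop in Hy as [Hyx Hsy].
    unfold goodb in Hg; destruct (Rle_dec _ _); [|discriminate].
    apply Bool.negb_true_iff in Hyx; rewrite Hyx, Hsy; simpl; lra.
Qed.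

Lemma prob_others_false_le_cube k beta sign nu x (p : nat) : 0 <= beta ->
  (forall y, (y < k)%nat -> 0 <= nu y <= 1) -> (p <= n_good_pos k beta sign nu x)%nat ->
  prob_others_false k sign nu x <= exp (- (INR p * INR k * beta / 6)) ^ 3.
Proof.
  intros Hb Hnu Hp.
  assert (Heps : 0 <= exp (- (INR k * beta / 2)) <= 1).
  { split; [left; apply exp_pos | apply exp_neg_le_1]. pose proof (pos_INR k); nra. }
  eapply Rle_trans; [apply prob_others_false_le_pow, Hnu|].
  eapply Rle_trans; [apply (pow_le_pow_le1 _ _ _ Heps Hp)|].
  rewrite !exp_pow; right; f_equal; simpl; field.
Qed.

Lemma beta_ge_100 (k : nat) (beta : R) :
  (512 <= k)%nat -> beta >= INR k * ln 2 - 10 * ln (INR k) -> 100 <= beta.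
Proof.
  intros Hk Hbeta.
  apply le_INR in Hk; rewrite INR_IZR_INZ in Hk; simpl in Hk.
  assert (Hln : ln (INR k) <= INR k / 512 - 1 + 9 * ln 2).
  { replace (INR k) with (INR k / 512 * 2 ^ 9) at 1 by (simpl; field).
    rewrite ln_mult, ln_pow by (simpl; lra).
    pose proof (ln_le_sub_one (INR k / 512)); simpl INR; lra. }
  pose proof ln_lt_2; nra.
Qed.

Lemma exp_99_mul_exp_neg_le_half (beta : R) :
  100 <= beta -> exp (99 / 100 * beta) * exp (- beta) <= 1 / 2.
Proof.
  intro Hb; rewrite <- exp_plus.
  replace (99 / 100 * beta + - beta) with (- (beta / 100)) by field.
  apply exp_neg_le_half; lra.
Qed.

Lemma exp_99_mul_union_bound_le_half (k beta : R) : 512 <= k -> 100 <= beta ->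
  exp (99 / 100 * beta) * (k * exp (- (k * beta / 2))) <= 1 / 2.
Proof.
  intros Hk Hb; set (t := (k / 2 - 99 / 100) * beta).
  assert (Hexp : exp (99 / 100 * beta) * exp (- (k * beta / 2)) = exp (- t))
    by (rewrite <- exp_plus; unfold t; f_equal; field).
  assert (Ht : 2 * k <= 1 + t) by (unfold t; nra).
  pose proof (exp_neg_mul_one_add_le t); pose proof (exp_pos (- t)).
  replace (exp (99 / 100 * beta) * (k * exp (- (k * beta / 2)))) with (k * exp (- t))
    by (rewrite <- Hexp; ring).
  nra.
Qed.

Lemma exp_99_le_inv_one_sub k beta sign nu x : 512 <= INR k -> 100 <= beta ->
  (forall y, (y < k)%nat -> 0 <= nu y <= 1) ->
  (forall y, (y < k)%nat -> y <> x -> sign y = false) ->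
  (forall y, (y < k)%nat -> sign y = false -> good k beta nu y) ->
  exp (99 / 100 * beta) <= / (1 - (1 - exp (- beta)) * prob_others_false k sign nu x).
Proof.
  intros Hk Hb Hnu Hneg Hgood.
  apply (le_inv_one_sub_mul _ _ _ (INR k * exp (- (INR k * beta / 2)))).
  - split; [apply exp_pos | apply exp_neg_le_1; lra].
  - apply prob_others_false_bounds, Hnu.
  - left; apply exp_pos.
  - apply one_sub_prob_others_false_le; assumption.
  - now apply exp_99_mul_exp_neg_le_half.
  - now apply exp_99_mul_union_bound_le_half.
Qed.

(* With [v = exp (-pk beta/6)], [Q <= v^3] while the target is [exp (-v^2)]. *)
Lemma exp_neg_exp_le_one_sub k beta sign nu x (p : nat) : 512 <= INR k -> 100 <= beta ->
  (forall y, (y < k)%nat -> 0 <= nu y <= 1) ->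
  (1 <= p)%nat -> (p <= n_good_pos k beta sign nu x)%nat ->
  exp (- exp (- (INR p * INR k * beta / 3))) <=
  1 - (1 - exp (- beta)) * prob_others_false k sign nu x.
Proof.
  intros Hk Hb Hnu Hp1 Hp; apply (le_INR 1) in Hp1; simpl in Hp1.
  pose proof (prob_others_false_bounds k sign nu x Hnu).
  pose proof (prob_others_false_le_cube k beta sign nu x p ltac:(lra) Hnu Hp) as HQp.
  set (v := exp (- (INR p * INR k * beta / 6))) in HQp.
  assert (Hpk : 512 <= INR p * INR k) by nra.
  assert (Hv : 0 <= v <= 1 / 2) by (split; [left; apply exp_pos | apply exp_neg_le_half; nra]).
  replace (- (INR p * INR k * beta / 3)) with (2 * - (INR p * INR k * beta / 6)) by field.
  rewrite <- (exp_pow _ 2); fold v; simpl INR.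
  pose proof (exp_neg_sq_le_one_sub_cube v Hv); pose proof (exp_pos (- beta)); nra.
Qed.

Theorem lemma3p5 :
  exists k0 : nat, forall k : nat, (k0 <= k)%nat ->
  forall beta : R, beta >= INR k * ln 2 - 10 * ln (INR k) ->
  forall (sign : nat -> bool) (nu : nat -> R),
  (forall y, (y < k)%nat -> 0 <= nu y <= 1) ->
  forall x : nat, (x < k)%nat ->
  let ratio := hatnu beta k sign nu x true / hatnu beta k sign nu x false in
  (* (a) *)
  (exp (- beta) <= ratio <= exp beta) /\
  (* (b) *)
  (sign x = true -> ratio >= 1) /\
  (* (c) *)
  ((sign x = true /\ (forall y, (y < k)%nat -> y <> x -> sign y = false)) ->
   (forall y, (y < k)%nat -> sign y = false -> good k beta nu y) ->
   ratio >= exp (99 / 100 * beta)) /\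
  (* (d) *)
  (forall p : nat, (1 <= p)%nat -> (p <= n_good_pos k beta sign nu x)%nat ->
   ratio >= exp (- exp (- (INR p * INR k * beta / 3)))).
Proof.
  exists 512%nat; intros k Hk beta Hbeta sign nu Hnu x Hx ratio.
  pose proof (beta_ge_100 k beta Hk Hbeta) as Hb.
  assert (Hk512 : 512 <= INR k) by (apply le_INR in Hk; rewrite INR_IZR_INZ in Hk; exact Hk).
  pose proof (prob_others_false_bounds k sign nu x Hnu) as HQ.
  assert (He : 0 < exp (- beta) <= 1) by (split; [apply exp_pos | apply exp_neg_le_1; lra]).
  assert (Hexp_beta : 1 <= exp beta) by (pose proof (exp_ineq1_le beta); lra).
  pose proof (one_sub_mul_bounds _ _ He HQ) as HD.
  unfold ratio; rewrite hatnu_ratio_eq by assumption.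
  destruct (sign x).
  - assert (HinvD : 1 <= / (1 - (1 - exp (- beta)) * prob_others_false k sign nu x) <= exp beta).
    { rewrite <- Rinv_1, <- (Rinv_inv (exp beta)), <- exp_Ropp.
      split; apply Rinv_le_contravar; lra. }
    repeat split; try lra.
    + intros [_ Hneg] Hgood; apply Rle_ge, exp_99_le_inv_one_sub; assumption.
    + intros p _ _; pose proof (exp_neg_le_1 (exp (- (INR p * INR k * beta / 3)))).
      pose proof (exp_pos (- (INR p * INR k * beta / 3))); lra.
  - repeat split; try lra; try discriminate.
    intros p Hp1 Hp; apply Rle_ge, exp_neg_exp_le_one_sub; assumption.
Qed.
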